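(* Let $m>2$ and $k$ be positive integers. Then $\mathrm{msum}(mk-1,k)\ge k/2$.
   Context: For positive integers $n>k$, let $S_n$ be the set of permutations $\pi=(\pi_1,\dots,\pi_n)$ of $1,\dots,n$, with cyclic indexing $\pi_{n+i}=\pi_i$, and $s_i=\sum_{j=0}^{k-1}\pi_{i+j}$ for $i=1,\dots,n$. Define $\mathrm{msum}(\pi,k)=\max_{1\le i\le n}s_i-\frac{k(n+1)}{2}$ and $\mathrm{msum}(n,k)=\min_{\pi\in S_n}\mathrm{msum}(\pi,k)$. *)

From mathcomp Require Import all_boot all_order all_algebra all_fingroup.
Set Implicit Arguments. Unset Strict Implicit. Unset Printing Implicit Defensive.
Import Order.TTheory GRing.Theory Num.Theory.

(* A permutation pi of 1..n is represented by p : 'S_n (a permutation of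
   {0,..,n-1}); the value pi_{i} (1-based position i) is (p (i-1)).+1. *)

(* value at cyclic 0-based position x, i.e. pi_{x+1} with cyclic indexing *)
Definition pval (n : nat) (p : 'S_n) (x : nat) : nat :=
  match @insub nat (fun y => y < n) 'I_n (x %% n) with
  | Some o => (p o).+1
  | None => 0
  end.

(* s_{i+1} = sum_{j=0}^{k-1} pi_{i+1+j}, for 0-based i *)
Definition wsum (n k : nat) (p : 'S_n) (i : nat) : nat :=
  \sum_(j < k) pval p (i + j).

Local Open Scope ring_scope.

Definition msum_perm (n k : nat) (p : 'S_n) : rat :=
  ((\max_(i < n) wsum k p i)%N)%:R - (k * (n + 1))%:R / 2%:R.

(* msum(n,k) = min over all permutations (the identity is used as the
   initial value of the iterated min; it belongs to the range) *)
Definition msum (n k : nat) : rat :=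
  \big[Num.min/msum_perm k (1 : 'S_n)]_(p : 'S_n) msum_perm k p.

From Pilot Require Import Defs.
From mathcomp Require Import all_boot all_order all_algebra all_fingroup zify.
Import Order.TTheory GRing.Theory Num.Theory.

(* Let n = mk - 1 and let M be the largest window sum.  Starting at the
   position holding the value n, m consecutive windows of length k cover all
   n positions once and that position a second time, so
   mM >= n(n+1)/2 + n.  For n = mk - 1 this reads 2M >= mk^2 + k - 2/m, and
   as 2M is an integer and m > 2, 2M >= mk^2 + k, i.e.
   max_i s_i - k(n+1)/2 >= k/2. *)

Section Windows.

Variables (n k : nat) (p : 'S_n).

Lemma pval_mod x : Defs.pval p (x %% n) = Defs.pval p x.
Proof. by rewrite /Defs.pval modn_mod. Qed.

Lemma pvalE (i : 'I_n) : Defs.pval p i = (p i).+1.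
Proof.
rewrite /Defs.pval modn_small // insubT // => lt_in.
by congr (p _).+1; apply: val_inj.
Qed.

Lemma pvalDn x : Defs.pval p (x + n) = Defs.pval p x.
Proof. by rewrite -pval_mod modnDr pval_mod. Qed.

Lemma pval_onto v : (0 < v <= n)%N -> exists i, Defs.pval p i = v.
Proof.
case/andP=> v_gt0 le_vn; have lt_vn : (v.-1 < n)%N by rewrite prednK.
by exists ((p^-1)%g (Ordinal lt_vn)); rewrite pvalE permKV /= prednK.
Qed.

Lemma wsum_mod x : wsum k p (x %% n) = wsum k p x.
Proof. by apply: eq_bigr => j _; rewrite -[LHS]pval_mod modnDml pval_mod. Qed.

Lemma wsum_le_max x : (0 < n)%N -> (wsum k p x <= \max_(i < n) wsum k p i)%N.
Proof.
move=> n_gt0; rewrite -wsum_mod.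
exact: (@leq_bigmax _ (fun i : 'I_n => wsum k p i) (Ordinal (ltn_pmod x n_gt0))).
Qed.

Lemma sum_pval_shift i :
  \sum_(s < n) Defs.pval p (i + s) = \sum_(s < n) Defs.pval p s.
Proof.
elim: i => [|i IHi]; first by apply: eq_bigr => s _; rewrite add0n.
rewrite -IHi; have := erefl (\sum_(s < n.+1) Defs.pval p (i + s)).
rewrite {1}big_ord_recl big_ord_recr /= addn0 pvalDn addnC => /addIn <-.
by apply: eq_bigr => s _; rewrite addSnnS.
Qed.

Lemma sum_pval : \sum_(s < n) Defs.pval p s = 'C(n.+1, 2).
Proof.
rewrite -bin2_sum big_nat_recl // big_mkord add0n.
by rewrite [RHS](reindex_inj (@perm_inj _ p)); apply: eq_bigr => s _; rewrite pvalE.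
Qed.

Lemma sum_consecutive_wsum m i : (m * k = n.+1)%N ->
  \sum_(t < m) wsum k p (i + t * k) = (\sum_(s < n) Defs.pval p s + Defs.pval p i)%N.
Proof.
move=> mk_eq.
have -> : \sum_(t < m) wsum k p (i + t * k) = \sum_(0 <= s < m * k) Defs.pval p (i + s).
  rewrite big_nat_mul big_mkord; apply: eq_bigr => t _.
  rewrite (big_addn 0 _ (t * k)) mulSn addnK big_mkord.
  by apply: eq_bigr => j _; rewrite (addnC j) addnA.
by rewrite mk_eq big_nat_recr //= big_mkord sum_pval_shift pvalDn.
Qed.

Lemma max_wsum_lower_bound m : (0 < n)%N -> (m * k = n.+1)%N ->
  (n * n.+3 <= m * (2 * \max_(i < n) wsum k p i))%N.
Proof.
move=> n_gt0 mk_eq.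
have [|i pval_i] := @pval_onto n; first by rewrite n_gt0 leqnn.
have : (\sum_(t < m) wsum k p (i + t * k) <= \sum_(t < m) \max_(j < n) wsum k p j)%N.
  by apply: leq_sum => t _; apply: wsum_le_max.
rewrite sum_consecutive_wsum // sum_nat_const card_ord pval_i.
rewrite sum_pval; have := mul_bin_diag n.+1 1; rewrite bin1; lia.
Qed.

End Windows.

Lemma max_wsum_ge m k (p : 'S_(m * k - 1)) : (2 < m)%N -> (0 < k)%N ->
  (k * (m * k + 1) <= 2 * \max_(i < m * k - 1) wsum k p i)%N.
Proof.
move=> m_gt2 k_gt0.
have n_gt0 : (0 < m * k - 1)%N by nia.
have mk_eq : (m * k = (m * k - 1).+1)%N by nia.
have := @max_wsum_lower_bound _ k p m n_gt0 mk_eq; nia.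
Qed.

Local Open Scope ring_scope.

Lemma msum_perm_ge m k (p : 'S_(m * k - 1)) : (2 < m)%N -> (0 < k)%N ->
  k%:R / 2%:R <= msum_perm k p.
Proof.
move=> m_gt2 k_gt0; have mk_gt0 : (0 < m * k)%N by nia.
have := @max_wsum_ge m k p m_gt2 k_gt0.
rewrite /msum_perm subnK //.
rewrite lerBrDr -mulrDl ler_pdivrMr ?ltr0n // -natrD -natrM ler_nat.
by move=> ?; lia.
Qed.

Lemma le_msum n k (a : rat) :
  (forall p : 'S_n, a <= msum_perm k p) -> a <= msum n k.
Proof.
move=> le_a; apply: (big_ind (fun x => a <= x)) => // x y ax ay.
by rewrite le_min ax ay.
Qed.

Theorem lemma4p1 (m k : nat) (hm : (2 < m)%N) (hk : (0 < k)%N) :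
  k%:R / 2%:R <= msum (m * k - 1) k.
Proof. by apply: le_msum => p; apply: msum_perm_ge. Qed.
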